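(* Let $\mathcal{C}$ be a finite set of classes and let $(\ell_\star, \ell_1, \dots, \ell_K)$ be a random tuple of $\mathcal{C}$-valued labels ($\ell_\star$ the oracle label, $\ell_i$ the label of annotator $i$) such that $\mathbb{P}(\ell_i = \ell_\star \mid \ell_j = \ell_\star) \ge \mathbb{P}(\ell_i = \ell_\star)$ for all $i, j \in \{1,\dots,K\}$ with $\mathbb{P}(\ell_j = \ell_\star) > 0$. Let $(\ell_\star^{(n)}, \ell_1^{(n)}, \dots, \ell_K^{(n)})$, $n = 1, \dots, N$, be $N$ independent copies of this tuple (labels on $N$ independently sampled data points), and define the empirical agreement ratios $$\mathbb{P}^{(N)}(\ell_i = \ell_j) = \frac{1}{N}\sum_{n=1}^N \big[\ell_i^{(n)} = \ell_j^{(n)}\big].$$ Then for every $t_u > 0$, with probability at least $1 - \delta_u$ where $\delta_u = \exp(-2 N t_u^2)$, $$\frac{1}{K}\sum_{i=1}^K \mathbb{P}(\ell_i = \ell_\star) \le \sqrt{t_u + \frac{1}{K^2}\sum_{i=1}^K\sum_{j=1}^K \mathbb{P}^{(N)}(\ell_i = \ell_j)}.$$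
   Context: $[\cdot]$ denotes the Iverson bracket (1 if the statement holds, 0 otherwise). $\frac{1}{K}\sum_{i}\mathbb{P}(\ell_i = \ell_\star)$ is the oracle accuracy of the average annotator (an annotator chosen uniformly at random among the $K$). *)

From HB Require Import structures.
From mathcomp Require Import all_boot all_order all_algebra.
From mathcomp Require Import reals.
From mathcomp Require Import sequences exp.
Set Implicit Arguments. Unset Strict Implicit. Unset Printing Implicit Defensive.
Import Order.TTheory GRing.Theory Num.Theory.
Local Open Scope ring_scope.

(* A label tuple: (oracle label, labels of annotators 0..K-1). *)
Definition labels (C : finType) (K : nat) : finType :=
  (C * {ffun 'I_K -> C})%type.

Definition is_pmf (R : realType) (T : finType) (p : T -> R) : Prop :=
  (forall x, 0 <= p x) /\ \sum_(x : T) p x = 1.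

Definition Pr (R : realType) (T : finType) (p : T -> R) (A : pred T) : R :=
  \sum_(x : T | A x) p x.

Definition iid (R : realType) (T : finType) (N : nat) (p : T -> R)
  (s : {ffun 'I_N -> T}) : R := \prod_(n < N) p (s n).

Definition emp_agree (C : finType) (K N : nat) (R : realType)
  (s : {ffun 'I_N -> labels C K}) (i j : 'I_K) : R :=
  (\sum_(n < N) (((s n).2 i == (s n).2 j) : nat)%:R) / N%:R.

(* Let f(x) be the fraction of ordered annotator pairs (i, j) that agree on the
   label tuple x.  Agreement of i and j is implied by both being correct, so by
   the positive-correlation hypothesis E f >= K^-2 sum_(i,j) P(l_i = l_star) P(l_j = l_star),
   the square of the mean accuracy.  The empirical mean of f over the N copies is
   K^-2 sum_(i,j) P^(N)(l_i = l_j), and f takes values in [0, 1], so Hoeffding's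
   inequality (Chernoff's bound together with Hoeffding's lemma on the moment
   generating function) puts E f below t plus that empirical mean with
   probability at least 1 - exp(-2 N t^2). *)

From HB Require Import structures.
From mathcomp Require Import all_boot all_order all_algebra.
From mathcomp Require Import reals.
From mathcomp Require Import sequences exp.
From mathcomp Require Import interval_inference normedtype derive realfun convex.
From mathcomp Require Import lra ring.
Set Implicit Arguments. Unset Strict Implicit. Unset Printing Implicit Defensive.
Import Order.TTheory GRing.Theory Num.Theory.
Import numFieldNormedType.Exports.
Local Open Scope ring_scope.

Definition Ex {R : realType} {T : finType} (p : T -> R) (f : T -> R) : R :=
  \sum_(x : T) p x * f x.

Section FiniteProbability.
Variables (R : realType) (T : finType) (p : T -> R).
Hypothesis p_ge0 : forall x, 0 <= p x.

Lemma Pr_ge0 (A : pred T) : 0 <= Pr p A.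
Proof. exact: sumr_ge0. Qed.

Lemma Pr_Ex (A : pred T) : Pr p A = Ex p (fun x => (A x)%:R).
Proof.
rewrite /Pr /Ex big_mkcond; apply: eq_bigr => x _.
by case: (A x); rewrite ?mulr1 ?mulr0.
Qed.

Lemma ExZ (c : R) (f : T -> R) : Ex p (fun x => c * f x) = c * Ex p f.
Proof. by rewrite /Ex mulr_sumr; apply: eq_bigr => x _; rewrite mulrCA. Qed.

Lemma Ex_sum (I : Type) (r : seq I) (P : pred I) (g : I -> T -> R) :
  Ex p (fun x => \sum_(i <- r | P i) g i x) = \sum_(i <- r | P i) Ex p (g i).
Proof. by rewrite /Ex; under eq_bigr do rewrite mulr_sumr; exact: exchange_big. Qed.

Lemma ler_Ex (f g : T -> R) : (forall x, f x <= g x) -> Ex p f <= Ex p g.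
Proof. by move=> fg; apply: ler_sum => x _; rewrite ler_wpM2l. Qed.

Lemma Pr_le (A B : pred T) : (forall x, A x -> B x) -> Pr p A <= Pr p B.
Proof.
move=> AB; rewrite !Pr_Ex; apply: ler_Ex => x.
by case Ax: (A x); rewrite ?(AB x Ax) ?ler0n.
Qed.

Lemma Pr_le_Ex (A : pred T) (f : T -> R) :
  (forall x, 0 <= f x) -> (forall x, A x -> 1 <= f x) -> Pr p A <= Ex p f.
Proof.
move=> f_ge0 Af; rewrite Pr_Ex; apply: ler_Ex => x.
by case Ax: (A x); [exact: Af | exact: f_ge0].
Qed.

Lemma Pr_mul_le_joint (A B : pred T) :
  (0 < Pr p B -> Pr p A <= Pr p (fun x => A x && B x) / Pr p B) ->
  Pr p A * Pr p B <= Pr p (fun x => A x && B x).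
Proof.
move=> condAB; have [PrB_gt0|PrB_le0] := ltrP 0 (Pr p B).
  by rewrite -ler_pdivlMr // condAB.
have -> : Pr p B = 0 by apply/le_anti; rewrite PrB_le0 Pr_ge0.
by rewrite mulr0 Pr_ge0.
Qed.

Hypothesis p_sum1 : \sum_x p x = 1.

Lemma Pr_predC (A : pred T) : Pr p A = 1 - Pr p (predC A).
Proof.
have -> : Pr p (predC A) = \sum_(x | ~~ A x) p x by [].
by rewrite -p_sum1 (bigID A) addrK.
Qed.

End FiniteProbability.

Section IndependentCopies.
Variables (R : realType) (T : finType) (N : nat) (p : T -> R).

Lemma Ex_iid_prod (f : T -> R) :
  Ex (@iid R T N p) (fun s => \prod_(n < N) f (s n)) = Ex p f ^+ N.
Proof.
have -> : Ex p f ^+ N = \prod_(n < N) Ex p f by rewrite prodr_const card_ord.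
rewrite /Ex bigA_distr_bigA /=.
by apply: eq_bigr => s _; rewrite -big_split.
Qed.

Lemma iid_pmf : is_pmf p -> is_pmf (@iid R T N p).
Proof.
case=> p_ge0 p_sum1; split=> [s|]; first exact: prodr_ge0.
rewrite /iid -(bigA_distr_bigA (fun (n : 'I_N) x => p x)) /=.
by under eq_bigr do rewrite p_sum1; rewrite prodr_const expr1n.
Qed.

End IndependentCopies.

Section BernoulliMgf.
Variables (R : realType) (th : R).
Hypotheses (th0 : 0 <= th) (th1 : th <= 1).

Let mgf (u : R) := 1 - th + th * expR u.

Let mgf_gt0 u : 0 < mgf u.
Proof.
rewrite /mgf; have [->|th_neq1] := eqVneq th 1; first by rewrite subrr add0r mul1r expR_gt0.
have th_lt1 : th < 1 by rewrite lt_neqAle th_neq1 th1.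
have := mulr_ge0 th0 (expR_ge0 u); lra.
Qed.

Let mgf_derive (u : R) : is_derive u (1 : R) mgf (th * expR u).
Proof. by apply: is_derive_eq; rewrite add0r mul1r. Qed.

Let slack (u : R) := th + u / 4 - 1 + (1 - th) / mgf u.

Let slack_derive (u : R) :
  is_derive u (1 : R) slack (1 / 4 - (1 - th) * th * expR u / mgf u ^+ 2).
Proof.
(* [is_derive_eq] picks the derivative of [1 / mgf] up from the context. *)
have inv_derive := is_deriveV (lt0r_neq0 (mgf_gt0 u)) (mgf_derive u).
apply: is_derive_eq.
rewrite /GRing.scale /= !mulr0 add0r mulr1 subr0.
by field; rewrite lt0r_neq0.
Qed.

Let slack_ge0 u : 0 <= u -> 0 <= slack u.
Proof.
move=> u0; have -> : 0 = slack 0.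
  by rewrite /slack /mgf expR0 mulr1 subrK invr1 mulr1 mul0r; ring.
have [zero_in u_in] : 0 \in `[0, u] /\ u \in `[0, u] by rewrite !in_itv /= !lexx u0.
apply: (@ger0_derive1_le_cc R slack 0 u _ _ _ 0 u zero_in u_in u0).
- by move=> x _; case: (slack_derive x).
- move=> x _; rewrite derive1E; have [_ ->] := slack_derive x.
  rewrite subr_ge0 ler_pdivrMr ?exprn_gt0 // mul1r.
  (* AM-GM: the two summands of [mgf x] have product [(1 - th) * th * expR x]. *)
  have := sqr_ge0 ((1 - th) - th * expR x); rewrite /mgf; nra.
- by apply: derivable_within_continuous => x _; case: (slack_derive x).
Qed.

Let expo (u : R) := - (th * u + u ^+ 2 / 8).

Let ratio (u : R) := mgf u * expR (expo u).

Let ratio_derive (u : R) :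
  is_derive u (1 : R) ratio (- (expR (expo u) * mgf u * slack u)).
Proof.
have expo_derive : is_derive u (1 : R) expo (- (th + u / 4)).
  by apply: is_derive_eq; rewrite /GRing.scale /= !mulr0 add0r mulr1; field.
have exp_derive := is_derive1_comp (is_derive_expR (expo u)) expo_derive.
apply: is_derive_eq.
rewrite /GRing.scale /= add0r mul1r /slack.
have := lt0r_neq0 (mgf_gt0 u); rewrite /mgf => mgf_neq0.
by field.
Qed.

Lemma bernoulli_mgf_le u : 0 <= u -> 1 - th + th * expR u <= expR (th * u + u ^+ 2 / 8).
Proof.
move=> u0.
have [zero_in u_in] : 0 \in `[0, u] /\ u \in `[0, u] by rewrite !in_itv /= !lexx u0.
have : ratio u <= ratio 0.
  apply: (@ler0_derive1_le_cc R ratio 0 u _ _ _ u 0 u_in zero_in u0).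
  - by move=> x _; case: (ratio_derive x).
  - move=> x; rewrite in_itv /= => /andP[x0 _].
    rewrite derive1E; have [_ ->] := ratio_derive x; rewrite oppr_le0.
    by rewrite !mulr_ge0 ?expR_ge0 ?(ltW (mgf_gt0 _)) ?slack_ge0 ?ltW.
  - by apply: derivable_within_continuous => x _; case: (ratio_derive x).
rewrite /ratio /mgf /expo expR0 mulr1 subrK mulr0 expr0n /= mul0r addr0 oppr0 expR0 mulr1.
by rewrite expRN ler_pdivrMr ?expR_gt0 // mul1r.
Qed.

End BernoulliMgf.

Section Hoeffding.
Variables (R : realType) (T : finType) (p : T -> R) (f : T -> R).
Hypothesis p_pmf : is_pmf p.
Hypothesis f_ge0 : forall x, 0 <= f x.
Hypothesis f_le1 : forall x, f x <= 1.

Let p_ge0 := p_pmf.1.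
Let p_sum1 := p_pmf.2.

Lemma Ex_ge0 : 0 <= Ex p f.
Proof. by apply: sumr_ge0 => x _; rewrite mulr_ge0. Qed.

Lemma Ex_le1 : Ex p f <= 1.
Proof.
rewrite -p_sum1; apply: ler_sum => x _.
by rewrite -[leRHS]mulr1 ler_wpM2l.
Qed.

Lemma hoeffding_lemma (lam : R) : 0 <= lam ->
  Ex p (fun x => expR (lam * (Ex p f - f x))) <= expR (lam ^+ 2 / 8).
Proof.
move=> lam_ge0; set mu := Ex p f.
set E0 := expR (lam * mu); set E1 := expR (lam * (mu - 1)).
(* Convexity bounds [expR (lam * (mu - f x))] by the chord between [f x = 0] and [f x = 1]. *)
have chord x : expR (lam * (mu - f x)) <= f x * E1 + (1 - f x) * E0.
  have := convex_expR (Itv01 (f_ge0 x) (f_le1 x)) (lam * (mu - 1)) (lam * mu).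
  by rewrite !convRE /= /unstable.onem; congr (expR _ <= _); ring.
apply: le_trans (ler_Ex p_ge0 chord) _.
have -> : Ex p (fun x => f x * E1 + (1 - f x) * E0)
    = E1 * (1 - (1 - mu) + (1 - mu) * expR lam).
  rewrite /Ex (eq_bigr (fun x => p x * E0 + (p x * f x) * (E1 - E0))); last first.
    by move=> x _; ring.
  rewrite big_split /= -!mulr_suml p_sum1 -/(Ex p f) -/mu.
  have -> : E0 = E1 * expR lam by rewrite /E0 /E1 -expRD; congr expR; ring.
  by ring.
apply: le_trans (ler_wpM2l (expR_ge0 _) (bernoulli_mgf_le _ _ lam_ge0)) _.
- by rewrite subr_ge0 Ex_le1.
- by rewrite lerBlDr lerDl Ex_ge0.
by rewrite /E1 -expRD ler_expR; lra.
Qed.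

Lemma hoeffding_lower_tail (N : nat) (t : R) : (0 < N)%N -> 0 < t ->
  1 - expR (- (2 * N%:R * t ^+ 2)) <=
  Pr (@iid R T N p) (fun s => Ex p f - t <= N%:R^-1 * \sum_(n < N) f (s n)).
Proof.
move=> N_gt0 t_gt0; set mu := Ex p f.
have N_pos : 0 < N%:R :> R by rewrite ltr0n.
have [q_ge0 q_sum1] := iid_pmf N p_pmf.
rewrite (Pr_predC q_sum1) lerD2l lerN2.
(* Chernoff: the exponent [4 t] minimises [N (lam^2 / 8 - lam t)]. *)
set lam := 4 * t.
pose g s := expR (lam * (\sum_(n < N) (mu - f (s n)) - N%:R * t)).
apply: le_trans (Pr_le_Ex q_ge0 (f := g) _ _) _.
- by move=> s; apply: expR_ge0.
- move=> s /=; rewrite -ltNge => tail_s.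
  rewrite -expR0 ler_expR pmulr_rge0 ?mulr_gt0 // subr_ge0 sumrB sumr_const card_ord.
  rewrite -(ltr_pM2l N_pos) mulrA mulfV ?lt0r_neq0 // mul1r in tail_s.
  rewrite -mulr_natl; lra.
have -> : Ex (@iid R T N p) g
    = expR (- (lam * (N%:R * t))) * Ex (@iid R T N p)
        (fun s => \prod_(n < N) expR (lam * (mu - f (s n)))).
  rewrite -ExZ; apply: eq_bigr => s _; congr (_ * _).
  by rewrite -expR_sum -expRD /g mulrBr mulr_sumr addrC.
rewrite (Ex_iid_prod N p (fun x => expR (lam * (mu - f x)))).
have mgf_powN : Ex p (fun x => expR (lam * (mu - f x))) ^+ N <= expR (lam ^+ 2 / 8) ^+ N.
  apply: lerXn2r; rewrite ?nnegrE ?expR_ge0 //; last exact/hoeffding_lemma/ltW/mulr_gt0.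
  by apply: sumr_ge0 => x _; rewrite mulr_ge0 ?expR_ge0.
apply: le_trans (ler_wpM2l (expR_ge0 _) mgf_powN) _.
by rewrite -expRM_natl -expRD ler_expR /lam; lra.
Qed.

End Hoeffding.

Section Agreement.
Context (R : realType) {C : finType} {K : nat}.

Definition correct (i : 'I_K) : pred (labels C K) := fun x => x.2 i == x.1.

Definition agreement (x : labels C K) : R :=
  (K%:R ^+ 2)^-1 * \sum_(i < K) \sum_(j < K) (x.2 i == x.2 j)%:R.

Lemma agreement_ge0 x : 0 <= agreement x.
Proof.
rewrite mulr_ge0 ?invr_ge0 ?exprn_ge0 ?ler0n //.
by do 2!apply: sumr_ge0 => ? _.
Qed.

Lemma agreement_le1 : (0 < K)%N -> forall x, agreement x <= 1.
Proof.
move=> K_gt0 x; rewrite /agreement ler_pdivrMl ?exprn_gt0 ?ltr0n // mulr1.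
apply: le_trans (_ : \sum_(i < K) \sum_(j < K) 1 <= _).
  by do 2!apply: ler_sum => ? _; rewrite lern1 leq_b1.
by rewrite !sumr_const card_ord -mulrnA -natrX ler_nat.
Qed.

Lemma emp_agree_mean (N : nat) (s : {ffun 'I_N -> labels C K}) :
  (K%:R ^+ 2)^-1 * \sum_(i < K) \sum_(j < K) emp_agree R s i j
  = N%:R^-1 * \sum_(n < N) agreement (s n).
Proof.
rewrite /agreement /emp_agree -mulr_sumr mulrCA; congr (_ * _).
rewrite [in RHS]exchange_big /= mulr_sumr; apply: eq_bigr => i _.
rewrite [in RHS]exchange_big /= mulr_sumr; apply: eq_bigr => j _.
by rewrite mulrC.
Qed.

Lemma sqr_mean_accuracy_le_Ex_agreement (p : labels C K -> R) :
  (forall x, 0 <= p x) ->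
  (forall i j, 0 < Pr p (correct j) ->
     Pr p (correct i) <= Pr p (fun x => correct i x && correct j x) / Pr p (correct j)) ->
  ((K%:R)^-1 * \sum_(i < K) Pr p (correct i)) ^+ 2 <= Ex p agreement.
Proof.
move=> p_ge0 correlated.
rewrite exprMn exprVn [(\sum_(i < K) _) ^+ 2]expr2 big_distrlr /= ExZ Ex_sum.
rewrite ler_wpM2l ?invr_ge0 ?exprn_ge0 ?ler0n //.
apply: ler_sum => i _; rewrite Ex_sum; apply: ler_sum => j _.
apply: le_trans (Pr_mul_le_joint p_ge0 (correlated i j)) _.
rewrite -Pr_Ex; apply: (Pr_le p_ge0) => x /andP[/eqP -> /eqP ->].
exact: eqxx.
Qed.

End Agreement.

Theorem theorem5 (R : realType) (C : finType) (K N : nat)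
  (p : labels C K -> R) (hp : is_pmf p) (hK : (0 < K)%N) (hN : (0 < N)%N)
  (hcond : forall i j : 'I_K,
     0 < Pr p (fun x => x.2 j == x.1) ->
     Pr p (fun x => (x.2 i == x.1) && (x.2 j == x.1)) / Pr p (fun x => x.2 j == x.1)
       >= Pr p (fun x => x.2 i == x.1))
  (t : R) (ht : 0 < t) :
  Pr (@iid R _ N p)
     (fun s => (K%:R)^-1 * \sum_(i < K) Pr p (fun x => x.2 i == x.1)
               <= Num.sqrt (t + (K%:R ^+ 2)^-1 *
                            \sum_(i < K) \sum_(j < K) emp_agree R s i j))
  >= 1 - expR (- (2 * N%:R * t ^+ 2)).
Proof.
have [p_ge0 _] := hp.
set acc := (K%:R)^-1 * _.
have acc_ge0 : 0 <= acc.
  by rewrite mulr_ge0 ?invr_ge0 ?ler0n //; apply: sumr_ge0 => i _; apply: Pr_ge0.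
have acc_sqr : acc ^+ 2 <= Ex p (agreement R) :=
  sqr_mean_accuracy_le_Ex_agreement p_ge0 hcond.
apply: le_trans (hoeffding_lower_tail hp (agreement_ge0 R) (agreement_le1 R hK) hN ht) _.
apply: (Pr_le (iid_pmf N hp).1) => s /=; rewrite emp_agree_mean => tail_s.
have acc_sqr_le : acc ^+ 2 <= t + N%:R^-1 * \sum_(n < N) agreement R (s n) by lra.
by rewrite -(ger0_norm acc_ge0) -sqrtr_sqr ler_sqrt // (le_trans (sqr_ge0 acc)).
Qed.
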